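(* Let $p,r$ be positive integers, $q=p+r$, and let $\Phi:U_{pq}(\mathbb{H})\to\mathbb{C}^{r\times 2p}$ be the map $$\Phi(Q)=\begin{pmatrix}U & V\end{pmatrix}\begin{pmatrix}Z-X & W-Y\\ \bar Y-\bar W & \bar Z-\bar X\end{pmatrix}^{-1},$$ where $Q=(Q_0;Q_1;Q_2)$ with $Q_0=Z+Wj$, $Q_1=X+Yj$, $Q_2=U+Vj$ ($Z,W,X,Y\in\mathbb{C}^{p\times p}$, $U,V\in\mathbb{C}^{r\times p}$). Then the complex valued components of $\Phi$ form an orthogonal harmonic family of $\mathbf{GL}_p(\mathbb{H})$-invariant functions on $U_{pq}(\mathbb{H})$, equipped with the semi-Euclidean metric.
   Context: $\mathbb{H}=\{z+wj: z,w\in\mathbb{C}\}$. $U_{pq}(\mathbb{H})=\{Q\in\mathbb{H}^{(p+q)\times p}: -Q_0^*Q_0+Q_1^*Q_1+Q_2^*Q_2<0\}$ (negative definite on $\mathbb{H}^p\setminus\{0\}$), where $Q_0,Q_1$ have $p$ rows and $Q_2$ has $r$ rows; $\mathbf{GL}_p(\mathbb{H})$ acts by right multiplication. The semi-Euclidean metric is $(X,Y)=\mathfrak{Re}\,\mathrm{trace}(X^*\mathrm{diag}(-I_p,I_q)Y)$; in the complex coordinates it is $-|dZ|^2-|dW|^2+|dX|^2+|dY|^2+|dU|^2+|dV|^2$. For a semi-Riemannian manifold $(M,g)$ and complex functions $\phi,\psi$, $\tau(\phi)$ is the Laplace–Beltrami operator (extended complex-linearly) and $\kappa(\phi,\psi)=g(\mathrm{grad}\,\phi,\mathrm{grad}\,\psi)$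 with $g$ extended complex-bilinearly. A set $\Omega$ of complex functions is an orthogonal harmonic family if $\tau(\phi)=0$ and $\kappa(\phi,\psi)=0$ for all $\phi,\psi\in\Omega$. *)

From HB Require Import structures.
From mathcomp Require Import all_boot all_order all_algebra.
From mathcomp Require Import all_classical all_reals all_analysis.
From mathcomp Require Import complex.
Set Implicit Arguments. Unset Strict Implicit. Unset Printing Implicit Defensive.
Import Order.TTheory GRing.Theory Num.Theory.
Local Open Scope ring_scope.

Section Defs.
Variable R : realType.
Local Notation C := (R[i]).

(* A quaternionic matrix A + B j (A, B complex matrices), with j z = conj(z) j. *)
Definition mconj m n (A : 'M[C]_(m, n)) : 'M[C]_(m, n) := map_mx (@conjc R) A.

(* product of quaternionic matrices (A + B j)(C' + D j) = (A C' - B conj D) + (A D + B conj C') j *)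
Definition qmul m n k (A B : 'M[C]_(m, n)) (C' D : 'M[C]_(n, k))
  : 'M[C]_(m, k) * 'M[C]_(m, k) :=
  (A *m C' - B *m mconj D, A *m D + B *m mconj C').

Definition sqnorm n (v : 'cV[C]_n) : R :=
  \sum_(i < n) ((complex.Re (v i ord0)) ^+ 2 + (complex.Im (v i ord0)) ^+ 2).

Definition qsqnorm n (ab : 'cV[C]_n * 'cV[C]_n) : R := sqnorm ab.1 + sqnorm ab.2.

(* A point Q = (Q0;Q1;Q2) of H^{(p+q) x p}, q = p + r, in complex coordinates:
   Q0 = Z + W j, Q1 = X + Y j, Q2 = U + V j. *)
Record HQ (p r : nat) := mkHQ {
  qZ : 'M[C]_p; qW : 'M[C]_p; qX : 'M[C]_p; qY : 'M[C]_p;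
  qU : 'M[C]_(r, p); qV : 'M[C]_(r, p) }.

Variables p r : nat.

(* Q belongs to U_{pq}(H): -Q0^*Q0 + Q1^*Q1 + Q2^*Q2 is negative definite on
   H^p \ {0}, i.e. for every nonzero v = a + b j in H^p,
   v^*(-Q0^*Q0 + Q1^*Q1 + Q2^*Q2)v = -|Q0 v|^2 + |Q1 v|^2 + |Q2 v|^2 < 0. *)
Definition inU (Q : HQ p r) : Prop :=
  forall a b : 'cV[C]_p, (a, b) != (0, 0) ->
    - qsqnorm (qmul (qZ Q) (qW Q) a b) + qsqnorm (qmul (qX Q) (qY Q) a b)
    + qsqnorm (qmul (qU Q) (qV Q) a b) < 0.

Definition U_pq : set (HQ p r) := [set Q | inU Q].

Definition qinvertible (G1 G2 : 'M[C]_p) : Prop :=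
  exists H1 H2 : 'M[C]_p,
    qmul G1 G2 H1 H2 = (1%:M, 0) /\ qmul H1 H2 G1 G2 = (1%:M, 0).

Definition ract (Q : HQ p r) (G1 G2 : 'M[C]_p) : HQ p r :=
  let Z := qmul (qZ Q) (qW Q) G1 G2 in
  let X := qmul (qX Q) (qY Q) G1 G2 in
  let U := qmul (qU Q) (qV Q) G1 G2 in
  mkHQ Z.1 Z.2 X.1 X.2 U.1 U.2.

Definition PhiDen (Q : HQ p r) : 'M[C]_(p + p) :=
  block_mx (qZ Q - qX Q) (qW Q - qY Q)
           (mconj (qY Q) - mconj (qW Q)) (mconj (qZ Q) - mconj (qX Q)).

Definition Phi (Q : HQ p r) : 'M[C]_(r, p + p) :=
  row_mx (qU Q) (qV Q) *m invmx (PhiDen Q).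

Definition addHQ (Q E : HQ p r) (t : R) : HQ p r :=
  mkHQ (qZ Q + (real_complex R t) *: qZ E) (qW Q + (real_complex R t) *: qW E) (qX Q + (real_complex R t) *: qX E)
       (qY Q + (real_complex R t) *: qY E) (qU Q + (real_complex R t) *: qU E) (qV Q + (real_complex R t) *: qV E).

Definition cderive (g : R -> C) : C :=
  Complex (derive1 (fun t => complex.Re (g t)) 0) (derive1 (fun t => complex.Im (g t)) 0).
Definition cderivable (g : R -> C) : Prop :=
  derivable (fun t => complex.Re (g t)) 0 1 /\ derivable (fun t => complex.Im (g t)) 0 1.

Definition pd (f : HQ p r -> C) (Q E : HQ p r) : C := cderive (fun t => f (addHQ Q E t)).
Definition pd2 (f : HQ p r -> C) (Q E : HQ p r) : C :=
  cderive (fun t => pd f (addHQ Q E t) E).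

(* real coordinate directions: real part (c = 1) / imaginary part (c = 'i)
   of the (i,j) entry of one of the blocks *)
Definition EZ (i j : 'I_p) (c : C) := mkHQ (c *: delta_mx i j) 0 0 0 (0 : 'M[C]_(r, p)) 0.
Definition EW (i j : 'I_p) (c : C) := mkHQ 0 (c *: delta_mx i j) 0 0 (0 : 'M[C]_(r, p)) 0.
Definition EX (i j : 'I_p) (c : C) := mkHQ 0 0 (c *: delta_mx i j) 0 (0 : 'M[C]_(r, p)) 0.
Definition EY (i j : 'I_p) (c : C) := mkHQ 0 0 0 (c *: delta_mx i j) (0 : 'M[C]_(r, p)) 0.
Definition EU (i : 'I_r) (j : 'I_p) (c : C) := mkHQ 0 0 0 0 (c *: delta_mx i j) 0.
Definition EV (i : 'I_r) (j : 'I_p) (c : C) := mkHQ 0 0 0 0 0 (c *: delta_mx i j).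

Definition units : seq C := [:: 1; Complex 0 1].

(* a generic bilinear "metric contraction" over the coordinate directions with
   signature -|dZ|^2 - |dW|^2 + |dX|^2 + |dY|^2 + |dU|^2 + |dV|^2 *)
Definition metric_sum (F : HQ p r -> C) : C :=
  \sum_(i < p) \sum_(j < p) \sum_(c <- units)
      (- F (EZ i j c) - F (EW i j c) + F (EX i j c) + F (EY i j c))
  + \sum_(i < r) \sum_(j < p) \sum_(c <- units) (F (EU i j c) + F (EV i j c)).

Definition tau (f : HQ p r -> C) (Q : HQ p r) : C := metric_sum (pd2 f Q).
Definition kappa (f g : HQ p r -> C) (Q : HQ p r) : C :=
  metric_sum (fun E => pd f Q E * pd g Q E).

Definition derivable2_on (A : set (HQ p r)) (f : HQ p r -> C) : Prop :=
  forall Q E, A Q ->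
    cderivable (fun t => f (addHQ Q E t)) /\
    cderivable (fun t => pd f (addHQ Q E t) E).

Definition orthogonal_harmonic_family (A : set (HQ p r)) (I : Type)
  (F : I -> HQ p r -> C) : Prop :=
  (forall k, derivable2_on A (F k)) /\
  (forall k Q, A Q -> tau (F k) Q = 0) /\
  (forall k l Q, A Q -> kappa (F k) (F l) Q = 0).

End Defs.

(* PhiDen Q is the complex form of the quaternionic matrix Q0 - Q1. It is
   invertible on U_pq: a nonzero v with Q0 v = Q1 v would give
   -|Q0 v|^2 + |Q1 v|^2 + |Q2 v|^2 = |Q2 v|^2 >= 0. Right multiplication by
   g in GL_p(H) multiplies both PhiDen Q and (U V) on the right by the complex
   form of g, so Phi is invariant.
   Phi depends only on Z - X, W - Y, U and V, so its first derivatives along an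
   X (resp. Y) coordinate are opposite to those along the matching Z (resp. W)
   coordinate and its second derivatives agree; these cancel in the metric of
   signature (-,-,+,+). In U and V, Phi is affine with a C-linear coefficient:
   second derivatives vanish, and a real and an imaginary direction contribute
   c^2 * (...) with c = 1, i to the conformality operator, which sums to 0.
   Along a real line, each component of Phi is a rational function whose
   denominator det PhiDen does not vanish at 0, which yields the derivatives. *)

From HB Require Import structures.
From mathcomp Require Import all_boot all_order all_algebra.
From mathcomp Require Import all_classical all_reals all_analysis.
From mathcomp Require Import complex.
From mathcomp Require Import ring.
Set Implicit Arguments. Unset Strict Implicit. Unset Printing Implicit Defensive.
Import Order.TTheory GRing.Theory Num.Theory.
Import numFieldNormedType.Exports.
Local Open Scope ring_scope.
Local Open Scope complex_scope.

Section ComplexRationalFunctions.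
Variable R : realType.
Local Notation C := (R[i]).

Definition pfrac (P G : {poly R}) (u : R) : R := P.[u] / G.[u].
Definition pfrac_num_deriv (P G : {poly R}) : {poly R} := P^`() * G - P * G^`().

Lemma is_derive_pfrac (P G : {poly R}) (x : R) : G.[x] != 0 ->
  is_derive x (1 : R) (pfrac P G) (pfrac (pfrac_num_deriv P G) (G * G) x).
Proof.
move=> Gx.
have D := is_deriveM (is_derive_poly P x) (is_deriveV Gx (is_derive_poly G x)).
have -> : pfrac P G = (horner P * (fun y => G.[y]^-1))%R by apply/funext.
apply: is_derive_eq D _.
rewrite /pfrac /pfrac_num_deriv !hornerE /GRing.scale /=.
by field; rewrite Gx.
Qed.

Lemma is_derive_comp_affine (h : R -> R) (x e d : R) :
  is_derive x (1 : R) h d -> is_derive (0 : R) (1 : R) (fun s => h (x + e * s)) (d * e).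
Proof.
move=> Dh; apply: (@is_derive1_comp _ h (fun s => x + e * s)).
  by rewrite mulr0 addr0.
have -> : (fun s => x + e * s) = cst x + e \*: id by apply/funext.
by apply: is_derive_eq; rewrite add0r /GRing.scale /= mulr1.
Qed.

Record crat := CRat { crat_re : {poly R}; crat_im : {poly R}; crat_den : {poly R} }.

Definition crat_eval (f : crat) (u : R) : C :=
  Complex (pfrac (crat_re f) (crat_den f) u) (pfrac (crat_im f) (crat_den f) u).

Definition crat_deriv (f : crat) : crat :=
  CRat (pfrac_num_deriv (crat_re f) (crat_den f))
       (pfrac_num_deriv (crat_im f) (crat_den f)) (crat_den f * crat_den f).

Definition crat_scale (e : R) (f : crat) : crat :=
  CRat (e *: crat_re f) (e *: crat_im f) (crat_den f).

Lemma crat_eval_scale e f u : crat_eval (crat_scale e f) u = e%:C * crat_eval f u.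
Proof. by rewrite /crat_eval /pfrac /= !hornerZ; simpc; rewrite !mulrA. Qed.

Lemma crat_deriv_scale e f : crat_deriv (crat_scale e f) = crat_scale e (crat_deriv f).
Proof.
by rewrite /crat_deriv /pfrac_num_deriv /= !derivZ -!scalerAl -!scalerBr.
Qed.

Lemma cderive_crat_affine (g : R -> C) f (x e : R) : (crat_den f).[x] != 0 ->
  (\forall u \near x, g u = crat_eval f u) ->
  cderivable (fun s => g (x + e * s)) /\
  cderive (fun s => g (x + e * s)) = e%:C * crat_eval (crat_deriv f) x.
Proof.
move=> Dx gf.
have Dre := is_derive_comp_affine e (near_eq_is_derive
  (filterS (fun u (h : g u = _) => congr1 (@complex.Re R) (esym h)) gf)
  (is_derive_pfrac (crat_re f) Dx)).
have Dim := is_derive_comp_affine e (near_eq_is_derive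
  (filterS (fun u (h : g u = _) => congr1 (@complex.Im R) (esym h)) gf)
  (is_derive_pfrac (crat_im f) Dx)).
split; first by split; [case: Dre | case: Dim].
rewrite /cderive !derive1E; case: Dre => _ ->; case: Dim => _ ->.
by rewrite /crat_eval; simpc; rewrite ![e * _]mulrC.
Qed.

Lemma cderive_near (g h : R -> C) : (\forall t \near 0, g t = h t) ->
  cderive g = cderive h.
Proof.
by move=> gh; rewrite /cderive !derive1E; congr Complex; apply: near_eq_derive;
  apply: filterS gh => t ->.
Qed.

Lemma cderivable_near (g h : R -> C) : (\forall t \near 0, g t = h t) ->
  cderivable h -> cderivable g.
Proof.
move=> gh [Dre Dim].
by split; [apply: near_eq_derivable _ Dre | apply: near_eq_derivable _ Dim];
  apply: filterS gh => t ->.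
Qed.

(* Only required off the zeros of the denominator, where [invmx] returns junk. *)
Definition crat_repr (f : crat) (g : R -> C) : Prop :=
  (crat_den f).[0] != 0 /\ forall u, (crat_den f).[u] != 0 -> g u = crat_eval f u.

Lemma near_horner_neq0 (P : {poly R}) (x : R) : P.[x] != 0 ->
  \forall u \near x, P.[u] != 0.
Proof.
move=> Px; have N0 : nbhs P.[x] [set y : R | y != 0]%classic.
  by apply: open_nbhs_nbhs; split; [exact: open_neq | exact: Px].
exact: (@continuous_horner R P x _ N0).
Qed.

Lemma cderive2_crat_scaled f g (e : R) : crat_repr f g ->
  [/\ cderivable (fun t => g (e * t)),
      cderivable (fun t => cderive (fun s => g (e * (t + s)))),
      cderive (fun t => g (e * t)) = e%:C * crat_eval (crat_deriv f) 0
    & cderive (fun t => cderive (fun s => g (e * (t + s)))) =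
      (e ^+ 2)%:C * crat_eval (crat_deriv (crat_deriv f)) 0].
Proof.
move=> [D0 gf].
have near_gf x : (crat_den f).[x] != 0 -> \forall u \near x, g u = crat_eval f u.
  by move=> Dx; apply: filterS (near_horner_neq0 Dx) => u; exact: gf.
have hE : (fun t => g (e * t)) = fun s => g (0 + e * s).
  by apply/funext => s; rewrite add0r.
have [Dh dh] := cderive_crat_affine e D0 (near_gf 0 D0).
pose f' := crat_scale e (crat_deriv f).
have dh_near : \forall t \near 0,
    cderive (fun s => g (e * (t + s))) = crat_eval f' (0 + e * t).
  have Dt : (crat_den f \Po (e%:P * 'X)).[0] != 0.
    by rewrite horner_comp !hornerE.
  apply: filterS (near_horner_neq0 Dt) => t; rewrite horner_comp !hornerE => Det.
  under eq_fun do rewrite mulrDr.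
  by rewrite (cderive_crat_affine e Det (near_gf _ Det)).2 crat_eval_scale.
have D0' : (crat_den f').[0] != 0 by rewrite /= hornerM mulf_neq0.
have [Dh' dh'] : cderivable (fun t => crat_eval f' (0 + e * t)) /\
    cderive (fun t => crat_eval f' (0 + e * t)) = e%:C * crat_eval (crat_deriv f') 0.
  by apply: cderive_crat_affine D0' _; apply: filterE.
split.
- by rewrite hE.
- exact: cderivable_near dh_near Dh'.
- by rewrite hE.
- rewrite (cderive_near dh_near) dh' crat_deriv_scale crat_eval_scale.
  by rewrite mulrA -rmorphM.
Qed.

End ComplexRationalFunctions.

Section RationalEntries.
Variable R : realType.
Local Notation C := (R[i]).

Lemma horner_Re_Im (P : {poly C}) (u : R) :
  P.[u%:C] = Complex (map_poly (@complex.Re R) P).[u] (map_poly (@complex.Im R) P).[u].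
Proof.
rewrite /map_poly !(horner_coef_wide _ (size_poly _ _)) horner_coef.
apply/eqP; rewrite eq_complex; apply/andP; split; apply/eqP;
  rewrite ?raddf_sum; apply: eq_bigr => i _;
  by rewrite coef_poly ltn_ord -rmorphXn; case: (P`_i) => ? ? /=; simpc.
Qed.

Lemma Re2_Im2_eq0 (z : C) : (complex.Re z ^+ 2 + complex.Im z ^+ 2 == 0) = (z == 0).
Proof.
by rewrite -(inj_eq (@complexI R)) add_Re2_Im2 sqrf_eq0 normr_eq0.
Qed.

Lemma divc_Re_Im (a b c d : R) : c ^+ 2 + d ^+ 2 != 0 ->
  Complex a b / Complex c d =
  Complex ((a * c + b * d) / (c ^+ 2 + d ^+ 2)) ((b * c - a * d) / (c ^+ 2 + d ^+ 2)).
Proof.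
move=> n0; have cd0 : Complex c d != 0 by rewrite -Re2_Im2_eq0.
by apply: (canLR (mulfK cd0)); simpc; congr Complex; field.
Qed.

Lemma crat_repr_ratio (g : R -> C) (A B : {poly C}) : B.[0] != 0 ->
  (forall u : R, B.[u%:C] != 0 -> g u = A.[u%:C] / B.[u%:C]) ->
  exists f, crat_repr f g.
Proof.
move=> B0 gAB.
pose Ar := map_poly (@complex.Re R) A; pose Ai := map_poly (@complex.Im R) A.
pose Br := map_poly (@complex.Re R) B; pose Bi := map_poly (@complex.Im R) B.
have den_eq0 u : ((Br ^+ 2 + Bi ^+ 2).[u] == 0) = (B.[u%:C] == 0).
  by rewrite -Re2_Im2_eq0 horner_Re_Im !hornerE.
exists (CRat (Ar * Br + Ai * Bi) (Ai * Br - Ar * Bi) (Br ^+ 2 + Bi ^+ 2)).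
split=> [|u]; first by rewrite /= den_eq0.
move=> /= Du; rewrite gAB -?den_eq0 // !horner_Re_Im divc_Re_Im.
  by rewrite /crat_eval /pfrac !hornerE.
by move: Du; rewrite !hornerE.
Qed.

Lemma crat_repr_mul_invmx m n (N0 N1 : 'M[C]_(m, n)) (M0 M1 : 'M[C]_n) a b :
  M0 \in unitmx ->
  exists f, crat_repr f (fun u => ((N0 + u%:C *: N1) *m invmx (M0 + u%:C *: M1)) a b).
Proof.
move=> M0u.
pose line k l (A0 A1 : 'M[C]_(k, l)) : 'M[{poly C}]_(k, l) :=
  map_mx polyC A0 + 'X *: map_mx polyC A1.
have line_eval k l (A0 A1 : 'M[C]_(k, l)) (u : R) :
    map_mx (horner_eval u%:C) (line k l A0 A1) = A0 + u%:C *: A1.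
  by apply/matrixP => i j; rewrite !mxE /horner_eval !hornerE mulrC.
apply: (@crat_repr_ratio _ ((line _ _ N0 N1 *m \adj (line _ _ M0 M1)) a b)
  (\det (line _ _ M0 M1))).
  by rewrite -[0]/((0 : R)%:C) -[_.[_]]/(horner_eval _ _) -det_map_mx line_eval
    scale0r addr0 -unitfE -unitmxE.
move=> u; rewrite -[(\det _).[_]]/(horner_eval _ _) -det_map_mx line_eval => Mu.
have -> : ((line _ _ N0 N1 *m \adj (line _ _ M0 M1)) a b).[u%:C] =
    map_mx (horner_eval u%:C) (line _ _ N0 N1 *m \adj (line _ _ M0 M1)) a b.
  by rewrite [RHS]mxE.
rewrite map_mxM map_mx_adj !line_eval.
by rewrite /invmx unitmxE unitfE Mu -scalemxAr mxE mulrC.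
Qed.

End RationalEntries.

Section ConjugateMatrix.
Variable R : realType.
Local Notation C := (R[i]).

Lemma mconj0 m n : mconj (0 : 'M[C]_(m, n)) = 0.
Proof. exact: map_mx0. Qed.

Lemma mconjD m n (A B : 'M[C]_(m, n)) : mconj (A + B) = mconj A + mconj B.
Proof. exact: map_mxD. Qed.

Lemma mconjN m n (A : 'M[C]_(m, n)) : mconj (- A) = - mconj A.
Proof. exact: map_mxN. Qed.

Lemma mconjB m n (A B : 'M[C]_(m, n)) : mconj (A - B) = mconj A - mconj B.
Proof. exact: map_mxB. Qed.

Lemma mconjM m n k (A : 'M[C]_(m, n)) (B : 'M[C]_(n, k)) :
  mconj (A *m B) = mconj A *m mconj B.
Proof. exact: map_mxM. Qed.

Lemma mconjK m n : involutive (@mconj R m n).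
Proof. by move=> A; apply/matrixP => i j; rewrite !mxE conjcK. Qed.

Lemma mconjZ_real m n (u : R) (A : 'M[C]_(m, n)) :
  mconj (u%:C *: A) = u%:C *: mconj A.
Proof. by apply/matrixP => i j; rewrite !mxE rmorphM /= oppr0. Qed.

End ConjugateMatrix.

Section DirectionalDerivatives.
Variables (R : realType) (p r : nat).
Local Notation C := (R[i]).
Implicit Types Q E : HQ R p r.

Lemma addHQ_add Q E t s : addHQ (addHQ Q E t) E s = addHQ Q E (t + s).
Proof. by rewrite /addHQ /= rmorphD; congr mkHQ; rewrite scalerDl addrA. Qed.

Lemma pd_scaled_dir (F : HQ R p r -> C) Q E E' (e : R) f :
  crat_repr f (fun u => F (addHQ Q E u)) ->
  (forall t, F (addHQ Q E' t) = F (addHQ Q E (e * t))) ->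
  [/\ cderivable (fun t => F (addHQ Q E' t)),
      cderivable (fun t => pd F (addHQ Q E' t) E'),
      pd F Q E' = e%:C * crat_eval (crat_deriv f) 0
    & pd2 F Q E' = (e ^+ 2)%:C * crat_eval (crat_deriv (crat_deriv f)) 0].
Proof.
move=> fF FE'.
have line : (fun t => F (addHQ Q E' t)) = fun t => F (addHQ Q E (e * t)).
  exact/funext.
have pd_line : (fun t => pd F (addHQ Q E' t) E') =
    fun t => cderive (fun s => F (addHQ Q E (e * (t + s)))).
  by apply/funext => t; rewrite /pd; congr cderive; apply/funext => s;
    rewrite addHQ_add FE'.
by rewrite /pd2 /pd line pd_line; exact: (cderive2_crat_scaled e fF).
Qed.

Lemma cderive_affine (x w : C) : cderive (fun s : R => x + s%:C * w) = w.
Proof.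
have D (a b : R) : derive1 (fun s : R => a + s * b) 0 = b.
  have -> : (fun s : R => a + s * b) = fun s => id (a + b * s).
    by apply/funext => s; rewrite mulrC.
  rewrite derive1E; case: (is_derive_comp_affine b (is_derive_id a (1 : R))) => _ ->.
  exact: mul1r.
case: x w => [x1 x2] [w1 w2]; rewrite /cderive.
congr Complex; [rewrite -[RHS](D x1 w1) | rewrite -[RHS](D x2 w2)];
  by apply: (congr1 (fun g => derive1 g 0)); apply/funext => s /=; simpc.
Qed.

Lemma cderive_cst (k : C) : cderive (fun _ : R => k) = 0.
Proof.
rewrite -(cderive_affine k 0); congr cderive.
by apply/funext => s; rewrite mulr0 addr0.
Qed.

End DirectionalDerivatives.

Section PhiAlongLines.
Variables (R : realType) (p r : nat).
Local Notation C := (R[i]).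
Implicit Types Q E : HQ R p r.
Local Notation phi a b := (fun Q : HQ R p r => Phi Q a b).

Lemma PhiDen_add Q E u : PhiDen (addHQ Q E u) = PhiDen Q + u%:C *: PhiDen E.
Proof.
rewrite /PhiDen /= scale_block_mx add_block_mx !mconjD !mconjZ_real.
by congr block_mx; rewrite ?scalerBr opprD addrACA.
Qed.

Lemma Phi_add Q E u : Phi (addHQ Q E u) =
  (row_mx (qU Q) (qV Q) + u%:C *: row_mx (qU E) (qV E)) *m
  invmx (PhiDen Q + u%:C *: PhiDen E).
Proof. by rewrite /Phi PhiDen_add /= scale_row_mx add_row_mx. Qed.

Lemma crat_repr_Phi Q E a b : PhiDen Q \in unitmx ->
  exists f, crat_repr f (fun u => Phi (addHQ Q E u) a b).
Proof.
have -> : (fun u => Phi (addHQ Q E u) a b) = fun u =>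
    ((row_mx (qU Q) (qV Q) + u%:C *: row_mx (qU E) (qV E)) *m
     invmx (PhiDen Q + u%:C *: PhiDen E)) a b.
  by apply/funext => u; rewrite Phi_add.
exact: crat_repr_mul_invmx.
Qed.

Lemma pd_Phi_opp a b Q E E' : PhiDen Q \in unitmx ->
  (forall t, Phi (addHQ Q E' t) = Phi (addHQ Q E (- t))) ->
  pd (phi a b) Q E' = - pd (phi a b) Q E /\ pd2 (phi a b) Q E' = pd2 (phi a b) Q E.
Proof.
move=> Qu EE'; have [f fE] := crat_repr_Phi E a b Qu.
have [_ _ dE d2E] := pd_scaled_dir (F := phi a b) (E' := E) (e := 1) fE
  (fun t => ltac:(by rewrite mul1r)).
have [_ _ dE' d2E'] := pd_scaled_dir (F := phi a b) (E' := E') (e := -1) fE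
  (fun t => ltac:(by rewrite mulN1r EE')).
by rewrite dE d2E dE' d2E' rmorphN1 rmorph1 sqrrN expr1n mulN1r !mul1r.
Qed.

Lemma Phi_eq_of_diff Q Q' :
  qZ Q - qX Q = qZ Q' - qX Q' -> qW Q - qY Q = qW Q' - qY Q' ->
  qU Q = qU Q' -> qV Q = qV Q' -> Phi Q = Phi Q'.
Proof.
move=> eZX eWY eU eV; rewrite /Phi /PhiDen eZX eWY eU eV -!mconjB.
by rewrite -(opprB (qW Q)) -(opprB (qW Q')) eWY eZX.
Qed.

Lemma Phi_addX Q i j c t :
  Phi (addHQ Q (EX r i j c) t) = Phi (addHQ Q (EZ r i j c) (- t)).
Proof.
apply: Phi_eq_of_diff => /=; rewrite ?scaler0 ?addr0 //.
by rewrite rmorphN scaleNr opprD addrA addrAC.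
Qed.

Lemma Phi_addY Q i j c t :
  Phi (addHQ Q (EY r i j c) t) = Phi (addHQ Q (EW r i j c) (- t)).
Proof.
apply: Phi_eq_of_diff => /=; rewrite ?scaler0 ?addr0 //.
by rewrite rmorphN scaleNr opprD addrA addrAC.
Qed.

Lemma Phi_add_flat Q E s : PhiDen E = 0 ->
  Phi (addHQ Q E s) = Phi Q + s%:C *: (row_mx (qU E) (qV E) *m invmx (PhiDen Q)).
Proof. by move=> E0; rewrite Phi_add E0 scaler0 addr0 mulmxDl -scalemxAl. Qed.

Lemma pd_Phi_flat a b Q E : PhiDen E = 0 ->
  pd (phi a b) Q E = (row_mx (qU E) (qV E) *m invmx (PhiDen Q)) a b.
Proof.
move=> E0; rewrite /pd; under eq_fun do rewrite Phi_add_flat // !mxE.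
by rewrite [RHS]mxE; exact: cderive_affine.
Qed.

Lemma pd2_Phi_flat a b Q E : PhiDen E = 0 -> pd2 (phi a b) Q E = 0.
Proof.
move=> E0; rewrite /pd2.
under eq_fun do rewrite pd_Phi_flat // PhiDen_add E0 scaler0 addr0.
exact: cderive_cst.
Qed.

Lemma PhiDen_EU i j c : PhiDen (EU i j c : HQ R p r) = 0.
Proof. by rewrite /PhiDen /= !subrr block_mx0. Qed.

Lemma PhiDen_EV i j c : PhiDen (EV i j c : HQ R p r) = 0.
Proof. by rewrite /PhiDen /= !subrr block_mx0. Qed.

Lemma pd_Phi_EU a b Q i j c : pd (phi a b) Q (EU i j c) =
  c * (row_mx (delta_mx i j) (0 : 'M[C]_(r, p)) *m invmx (PhiDen Q)) a b.
Proof.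
rewrite pd_Phi_flat ?PhiDen_EU //=.
by rewrite -[X in row_mx _ X](scaler0 _ c) -scale_row_mx -scalemxAl mxE.
Qed.

Lemma pd_Phi_EV a b Q i j c : pd (phi a b) Q (EV i j c) =
  c * (row_mx (0 : 'M[C]_(r, p)) (delta_mx i j) *m invmx (PhiDen Q)) a b.
Proof.
rewrite pd_Phi_flat ?PhiDen_EV //=.
by rewrite -[X in row_mx X _](scaler0 _ c) -scale_row_mx -scalemxAl mxE.
Qed.

End PhiAlongLines.

Section Denominator.
Variables (R : realType) (p r : nat).
Local Notation C := (R[i]).
Implicit Types Q : HQ R p r.

Lemma qsqnorm_ge0 n (ab : 'cV[C]_n * 'cV[C]_n) : 0 <= qsqnorm ab.
Proof.
by apply: addr_ge0; apply: sumr_ge0 => i _; apply: addr_ge0; apply: sqr_ge0.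
Qed.

Lemma qmul_eq_of_PhiDen_ker Q (x y : 'cV[C]_p) : PhiDen Q *m col_mx x y = 0 ->
  qmul (qZ Q) (qW Q) x (- mconj y) = qmul (qX Q) (qY Q) x (- mconj y).
Proof.
rewrite /PhiDen mul_block_col => /eqP.
rewrite col_mx_eq0 => /andP[/eqP ker1 /eqP ker2].
rewrite /qmul mconjN mconjK; congr pair; apply/eqP; rewrite -subr_eq0; apply/eqP.
  by rewrite -ker1 !mulmxN !opprK !mulmxBl opprD addrACA.
move/(congr1 (@mconj _ _ _)): ker2.
rewrite mconjD !mconjM !mconjB !mconjK mconj0 => ker2.
rewrite -oppr0 -ker2 !mulmxN !mulmxBl [in LHS]opprD opprK [in RHS]opprD !opprB.
by rewrite addrACA addrC; congr (_ + _); exact: addrC.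
Qed.

Lemma PhiDen_unit Q : U_pq Q -> PhiDen Q \in unitmx.
Proof.
move=> QU; rewrite unitmxE unitfE -det_tr; apply/negP => /det0P[v v0 vker].
set x := usubmx v^T; set y := dsubmx v^T.
have ker : PhiDen Q *m col_mx x y = 0.
  by rewrite vsubmxK -(trmxK (PhiDen Q)) -trmx_mul vker trmx0.
have xy0 : (x, - mconj y) != (0, 0).
  apply: contraNneq v0 => -[x0 /eqP]; rewrite oppr_eq0 => /eqP y0.
  rewrite -(trmxK v) -(vsubmxK v^T) -/x -/y x0 -(mconjK y) y0 mconj0.
  by rewrite col_mx0 trmx0.
have := QU _ _ xy0; rewrite (qmul_eq_of_PhiDen_ker ker) addNr add0r.
by rewrite ltNge qsqnorm_ge0.
Qed.

End Denominator.

Section Invariance.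
Variables (R : realType) (p r : nat).
Local Notation C := (R[i]).
Implicit Types Q : HQ R p r.

(* The complex form of the quaternionic matrix [A + B j]. *)
Definition qrep (A B : 'M[C]_p) : 'M[C]_(p + p) :=
  block_mx A B (- mconj B) (mconj A).

Lemma qrep_mul (A B G1 G2 : 'M[C]_p) :
  qrep A B *m qrep G1 G2 = qrep (qmul A B G1 G2).1 (qmul A B G1 G2).2.
Proof.
rewrite /qrep mulmx_block /qmul /=; congr block_mx.
- by rewrite mulmxN.
- by rewrite mconjD !mconjM mconjK mulNmx mulmxN opprD addrC.
- by rewrite mconjB !mconjM mconjK mulNmx addrC.
Qed.

Lemma qrep1 : qrep 1%:M 0 = 1%:M.
Proof. by rewrite /qrep mconj0 oppr0 /mconj map_mx1 -scalar_mx_block. Qed.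

Lemma qrep_unit G1 G2 : qinvertible G1 G2 -> qrep G1 G2 \in unitmx.
Proof.
move=> [H1 [H2 [GH _]]].
have GH1 : qrep G1 G2 *m qrep H1 H2 = 1%:M by rewrite qrep_mul GH qrep1.
exact: (mulmx1_unit GH1).1.
Qed.

Lemma PhiDen_qrep Q : PhiDen Q = qrep (qZ Q - qX Q) (qW Q - qY Q).
Proof. by rewrite /PhiDen /qrep !mconjB opprB. Qed.

Lemma PhiDen_ract Q G1 G2 : PhiDen (ract Q G1 G2) = PhiDen Q *m qrep G1 G2.
Proof.
rewrite !PhiDen_qrep qrep_mul /ract /qmul /= !mulmxBl.
by congr qrep; rewrite !opprD ?opprK addrACA.
Qed.

Lemma row_ract Q G1 G2 : row_mx (qU (ract Q G1 G2)) (qV (ract Q G1 G2)) =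
  row_mx (qU Q) (qV Q) *m qrep G1 G2.
Proof. by rewrite /qrep mul_row_block /ract /qmul /= mulmxN. Qed.

Lemma Phi_ract Q G1 G2 : PhiDen Q \in unitmx -> qinvertible G1 G2 ->
  Phi (ract Q G1 G2) = Phi Q.
Proof.
move=> Qu /qrep_unit Gu; rewrite /Phi PhiDen_ract row_ract -mulmxA; congr (_ *m _).
rewrite -[LHS](mulKmx Qu) [PhiDen Q *m (_ *m _)]mulmxA.
by rewrite mulmxV ?unitmx_mul ?Qu // mulmx1.
Qed.

End Invariance.

Section Harmonicity.
Variables (R : realType) (p r : nat).
Local Notation C := (R[i]).
Implicit Types Q : HQ R p r.
Local Notation phi a b := (fun Q : HQ R p r => Phi Q a b).

Lemma Phi_derivable2 a b : derivable2_on (@U_pq R p r) (phi a b).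
Proof.
move=> Q E /PhiDen_unit Qu; have [f fE] := crat_repr_Phi E a b Qu.
by have [] := pd_scaled_dir (F := phi a b) (E' := E) (e := 1) fE
  (fun t => ltac:(by rewrite mul1r)).
Qed.

Lemma sum_units_isotropic (f g f' g' : C -> C) :
  (forall c, f c = c * f 1) -> (forall c, g c = c * g 1) ->
  (forall c, f' c = c * f' 1) -> (forall c, g' c = c * g' 1) ->
  \sum_(c <- units R) (f c * g c + f' c * g' c) = 0.
Proof.
move=> fC gC f'C g'C.
have iM x y : 'i * x * ('i * y) = - (x * y) :> C.
  by rewrite mulrACA (_ : 'i * 'i = -1) ?mulN1r //; simpc.
rewrite /units !big_cons big_nil addr0 (fC 'i) (gC 'i) (f'C 'i) (g'C 'i) !iM.
by rewrite -opprD subrr.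
Qed.

Lemma signed_sum_eq0 (x y x' y' : C) : x' = x -> y' = y -> - x - y + x' + y' = 0.
Proof. by move=> -> ->; rewrite addrAC subrK addNr. Qed.

Lemma tau_Phi a b Q : U_pq Q -> tau (phi a b) Q = 0.
Proof.
move=> /PhiDen_unit Qu; rewrite /tau /metric_sum.
rewrite big1 ?add0r; last first.
  move=> i _; apply: big1 => j _; apply: big1 => c _.
  exact: signed_sum_eq0 (pd_Phi_opp a b Qu (Phi_addX Q i j c)).2
                        (pd_Phi_opp a b Qu (Phi_addY Q i j c)).2.
apply: big1 => i _; apply: big1 => j _; apply: big1 => c _.
by rewrite !pd2_Phi_flat ?PhiDen_EU ?PhiDen_EV ?addr0.
Qed.

(* The gradients of all such functions lie in one totally isotropic subspace. *)
Definition isotropic_grad (F : HQ R p r -> C) Q : Prop :=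
  [/\ forall i j c, pd F Q (EX r i j c) = - pd F Q (EZ r i j c),
      forall i j c, pd F Q (EY r i j c) = - pd F Q (EW r i j c),
      forall i j c, pd F Q (EU i j c) = c * pd F Q (EU i j 1)
    & forall i j c, pd F Q (EV i j c) = c * pd F Q (EV i j 1)].

Lemma signed_product_sum_eq0 (x u y v x' u' y' v' : C) :
  x' = - x -> u' = - u -> y' = - y -> v' = - v ->
  - (x * u) - (y * v) + x' * u' + y' * v' = 0.
Proof. by move=> -> -> -> ->; rewrite !mulrNN addrAC subrK addNr. Qed.

Lemma kappa_isotropic F G Q :
  isotropic_grad F Q -> isotropic_grad G Q -> kappa F G Q = 0.
Proof.
move=> [FX FY FU FV] [GX GY GU GV]; rewrite /kappa /metric_sum; cbv beta.
rewrite big1 ?add0r; last first.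
  move=> i _; apply: big1 => j _; apply: big1 => c _.
  exact: signed_product_sum_eq0 (FX i j c) (GX i j c) (FY i j c) (GY i j c).
apply: big1 => i _; apply: big1 => j _.
exact: sum_units_isotropic (FU i j) (GU i j) (FV i j) (GV i j).
Qed.

Lemma isotropic_grad_Phi a b Q : PhiDen Q \in unitmx -> isotropic_grad (phi a b) Q.
Proof.
move=> Qu; split=> i j c.
- exact: (pd_Phi_opp a b Qu (Phi_addX Q i j c)).1.
- exact: (pd_Phi_opp a b Qu (Phi_addY Q i j c)).1.
- by rewrite !pd_Phi_EU mul1r.
- by rewrite !pd_Phi_EV mul1r.
Qed.

End Harmonicity.

Theorem proposition6p2 (R : realType) (p r : nat) :
  (0 < p)%N -> (0 < r)%N ->
  (* Phi is well defined on U_pq(H): the denominator is invertible *)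
  (forall Q : HQ R p r, U_pq Q -> PhiDen Q \in unitmx) /\
  (* the components are GL_p(H)-invariant *)
  (forall (Q : HQ R p r) (G1 G2 : 'M[R[i]]_p), U_pq Q -> qinvertible G1 G2 ->
     Phi (ract Q G1 G2) = Phi Q) /\
  (* the components form an orthogonal harmonic family on U_pq(H) *)
  orthogonal_harmonic_family (@U_pq R p r)
    (fun (ab : 'I_r * 'I_(p + p)) (Q : HQ R p r) => Phi Q ab.1 ab.2).
Proof.
move=> _ _; split; first exact: PhiDen_unit.
split; first by move=> Q G1 G2 /PhiDen_unit; exact: Phi_ract.
split; first by move=> ab; exact: Phi_derivable2.
split=> [ab Q | ab ab' Q /PhiDen_unit Qu]; first exact: tau_Phi.
by apply: kappa_isotropic; exact: isotropic_grad_Phi.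
Qed.
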